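(* Let $L, L_1, M, M_1$ be linear partial differential operators in $\mathbb{R}^n$ (coefficients in $\mathbf{F}$) satisfying $M_1L = L_1M$. Put $X_2 = M$ and $\omega = M_1 - M$. If there exists a differential operator $X_1$ satisfying $[X_1,X_2] - \omega X_1 = L - L_1$, then $L$ and $L_1$ are connected by an Intertwining Laplace Transformation: with $H = X_1X_2 - L$ one has $L = X_1X_2 - H$, $[H,X_2] = \omega H$ (so $\omega = -[X_2,H]H^{-1}$ when $H\ne0$, and $\omega$ is a differential operator), and $L_1 = X_2X_1 + \omega X_1 - H$.
   Context: $\mathbf{F}$ is a differential field of functions of $x_1,\ldots,x_n$; operators lie in $\mathbf{F}[D_{x_1},\ldots,D_{x_n}]$; $[A,B]=AB-BA$; $H^{-1}$ is taken in the skew Ore field of fractions of this ring. Operators $L, L_1$ are connected by an Intertwining Laplace Transformation if $L = X_1X_2 - H$, $L_1 = X_2X_1+\omega X_1 - H$ with $\omega=-[X_2,H]H^{-1}$ a differential operator. *)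

From HB Require Import structures.
From mathcomp Require Import all_boot all_order all_algebra.
Set Implicit Arguments. Unset Strict Implicit. Unset Printing Implicit Defensive.
Import GRing.Theory.
Local Open Scope ring_scope.

(* The ring F[D_{x_1},...,D_{x_n}] of linear partial differential operators
   with coefficients in a differential field F is a (noncommutative) ring;
   the proposition is stated for an arbitrary ring R of operators. *)

Definition commr (R : nzRingType) (A B : R) : R := A * B - B * A.

From mathcomp Require Import all_boot all_order all_algebra.
Local Open Scope ring_scope.
Import GRing.Theory.

(* With [H = X1 M - L], the hypothesis on [X1] says exactly [H = M1 X1 - L1].
   Multiplying the first form by [M] on the right and the second by [M1] on
   the left and using [M1 L = L1 M] gives [H M = M1 H], i.e.
   [[H, M] = (M1 - M) H]; the remaining identities are rearrangements. *)

Section IntertwiningLaplace.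

Context {R : nzRingType}.

Lemma commrN (A B : R) : commr B A = - commr A B.
Proof. by rewrite /commr opprB. Qed.

Lemma commr_mulr_intertwined {A B C : R} :
  A * B = C * A -> commr A B = (C - B) * A.
Proof. by move=> eqAB; rewrite /commr eqAB mulrBl. Qed.

Lemma laplace_H_dual_form {L L1 M M1 X1 : R} :
  commr X1 M - (M1 - M) * X1 = L - L1 -> X1 * M - L = M1 * X1 - L1.
Proof.
rewrite /commr mulrBl opprB addrA subrK => eqX1.
by apply/eqP; rewrite subr_eq -addrA addrC -subr_eq eqX1 addrC.
Qed.

Lemma laplace_H_intertwined {L L1 M M1 X1 : R} :
  M1 * L = L1 * M -> X1 * M - L = M1 * X1 - L1 ->
  (X1 * M - L) * M = M1 * (X1 * M - L).
Proof.
by move=> intertw eqH; rewrite [in LHS]eqH mulrBl mulrBr mulrA intertw.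
Qed.

End IntertwiningLaplace.

Theorem proposition1 (R : nzRingType) (L L1 M M1 X1 : R) :
  M1 * L = L1 * M ->
  let X2 := M in
  let omega := M1 - M in
  commr X1 X2 - omega * X1 = L - L1 ->
  let H := X1 * X2 - L in
  [/\ L = X1 * X2 - H,
      commr H X2 = omega * H,
      (H != 0 -> omega * H = - commr X2 H)
    & L1 = X2 * X1 + omega * X1 - H].
Proof.
move=> intertw X2 omega eqX1 H.
have eqH : H = M1 * X1 - L1 := laplace_H_dual_form eqX1.
have commHX2 : commr H X2 = omega * H.
  exact: commr_mulr_intertwined (laplace_H_intertwined intertw eqH).
split=> [||_|].
- by rewrite /H opprB addrC subrK.
- exact: commHX2.
- by rewrite -commHX2 commrN.
- by rewrite eqH /omega /X2 mulrBl addrCA subrr addr0 opprB addrC subrK.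
Qed.
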